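(* Let $(\mathfrak g,\mu,P)$ be a Nijenhuis Lie algebra and $(M,P_M)$ a Nijenhuis representation over it. Then $(\mathrm C^\bullet_{\mathrm{NjO}}(\mathfrak g,M),\delta_{\mathrm{NjO},M})$ is a cochain complex, i.e. $\delta_{\mathrm{NjO},M}\circ\delta_{\mathrm{NjO},M}=0$.
   Context: All vector spaces are over a field $\mathbf k$ of characteristic $0$. A Nijenhuis Lie algebra is a Lie algebra $(\mathfrak g,\mu=[-,-]_\mu)$ with a linear $P:\mathfrak g\to\mathfrak g$ satisfying $[P a,P b]_\mu=P([Pa,b]_\mu+[a,Pb]_\mu-P[a,b]_\mu)$. A Nijenhuis representation is a Lie algebra representation $M$ of $(\mathfrak g,\mu)$ (action $a x$) with linear $P_M:M\to M$ such that $P(a)P_M(x)=P_M(P(a)x+aP_M(x)-P_M(ax))$. For a Lie algebra $(\mathfrak g,\mu)$ and representation $M$, the Chevalley–Eilenberg complex is $\mathrm C^n_{\mathrm{Lie}}(\mathfrak g,M)=\mathrm{Hom}(\wedge^n\mathfrak g,M)$, $n\ge0$, with $\delta_{\mathrm{Lie},M}(f)(a_1,\dots,a_{n+1})=\sum_{i=1}^{n+1}(-1)^{i-1}a_i f(a_1,\dots,\widehat{a_i},\dots,a_{n+1})+\sum_{i<j}(-1)^{i+j}f([a_i,a_j]_\mu,a_1,\dots,\widehat{a_i},\dots,\widehat{a_j},\dots,a_{n+1})$. Put $[a,b]_P:=[Pa,b]_\mu+[a,Pb]_\mu-P[a,b]_\mu$ and let $\mathfrak g$ act on $M$ by $a\rhd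 x:=P(a)x$. Let $\partial:\mathrm{Hom}(\wedge^n\mathfrak g,M)\to\mathrm{Hom}(\wedge^{n+1}\mathfrak g,M)$ be the Chevalley–Eilenberg differential of the bracket $[-,-]_P$ with coefficients in $M$ with action $\rhd$: $\partial(f)(a_1,\dots,a_{n+1})=\sum_{i}(-1)^{i-1}P(a_i)f(a_1,\dots,\widehat{a_i},\dots,a_{n+1})+\sum_{i<j}(-1)^{i+j}f([a_i,a_j]_P,a_1,\dots,\widehat{a_i},\dots,\widehat{a_j},\dots,a_{n+1})$. Define $\mathrm C^n_{\mathrm{NjO}}(\mathfrak g,M):=\mathrm{Hom}(\wedge^n\mathfrak g,M)$ for $n\ge0$ and $\delta_{\mathrm{NjO},M}(f):=-P_M\circ\delta_{\mathrm{Lie},M}(f)+\partial(f)$. *)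

From HB Require Import structures.
From mathcomp Require Import all_boot all_order all_algebra.
Set Implicit Arguments. Unset Strict Implicit. Unset Printing Implicit Defensive.
Import GRing.Theory.
Local Open Scope ring_scope.

Section Defs.
Variables (K : fieldType) (g M : lmodType K).

Definition bilinear_map (U V W : lmodType K) (b : U -> V -> W) : Prop :=
  (forall (c : K) u1 u2 v, b (c *: u1 + u2) v = c *: b u1 v + b u2 v) /\
  (forall (c : K) u v1 v2, b u (c *: v1 + v2) = c *: b u v1 + b u v2).

Definition is_lie_bracket (br : g -> g -> g) : Prop :=
  [/\ bilinear_map br,
      (forall a, br a a = 0) &
      (forall a b c, br a (br b c) + br b (br c a) + br c (br a b) = 0)].

Definition is_lie_rep (br : g -> g -> g) (act : g -> M -> M) : Prop :=
  bilinear_map act /\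
  (forall a b x, act (br a b) x = act a (act b x) - act b (act a x)).

Definition nij_bracket (P : g -> g) (br : g -> g -> g) (a b : g) : g :=
  br (P a) b + br a (P b) - P (br a b).

Definition is_nijenhuis_op (br : g -> g -> g) (P : g -> g) : Prop :=
  forall a b, br (P a) (P b) = P (nij_bracket P br a b).

Definition is_nijenhuis_rep (P : g -> g) (act : g -> M -> M) (PM : M -> M) : Prop :=
  forall a x, act (P a) (PM x) = PM (act (P a) x + act a (PM x) - PM (act a x)).

Definition upd n (a : 'I_n -> g) (i : 'I_n) (x : g) : 'I_n -> g :=
  fun k => if k == i then x else a k.

Definition multilinear n (f : ('I_n -> g) -> M) : Prop :=
  forall (a : 'I_n -> g) (i : 'I_n) (c : K) (x y : g),
    f (upd a i (c *: x + y)) = c *: f (upd a i x) + f (upd a i y).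

Definition alternating n (f : ('I_n -> g) -> M) : Prop :=
  forall (a : 'I_n -> g) (i j : 'I_n), i != j -> a i = a j -> f a = 0.

Definition skip1 n (a : 'I_n.+1 -> g) (i : 'I_n.+1) : 'I_n -> g :=
  fun k => a (lift i k).

(* index of the k-th (0-based) remaining argument after deleting positions i < j *)
Definition remidx (i j k : nat) : nat :=
  if (k < i)%N then k else if (k.+1 < j)%N then k.+1 else k.+2.

(* the argument list ([a_i,a_j], a_1, .., ^a_i, .., ^a_j, .., a_{n+1}) *)
Definition ce_arg2 n (br : g -> g -> g) (a : 'I_n.+1 -> g) (i j : 'I_n.+1)
  : 'I_n -> g :=
  fun k => if val k == 0%N then br (a i) (a j)
           else a (inord (remidx i j (val k).-1)).

(* Chevalley--Eilenberg differential (indices 0-based; signs agree with the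
   1-based formula) *)
Definition ce_diff (br : g -> g -> g) (act : g -> M -> M) n
  (f : ('I_n -> g) -> M) : ('I_n.+1 -> g) -> M :=
  fun a =>
    \sum_(i < n.+1) (-1) ^+ i *: act (a i) (f (skip1 a i))
  + \sum_(i < n.+1) \sum_(j < n.+1 | (i < j)%N)
        (-1) ^+ (i + j) *: f (ce_arg2 br a i j).

Definition njo_diff (br : g -> g -> g) (act : g -> M -> M) (P : g -> g)
  (PM : M -> M) n (f : ('I_n -> g) -> M) : ('I_n.+1 -> g) -> M :=
  fun a => - PM (ce_diff br act f a)
           + ce_diff (nij_bracket P br) (fun b x => act (P b) x) f a.

End Defs.

(* Put Q := -P_M, al x u := P(x) u - P_M(x u), b1 := [-,-]_P and b2 := [-,-]_mu.
   Then delta_NjO f is the Chevalley-Eilenberg formula in which the bracket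
   term f([a_i,a_j], ...) is replaced by f(b1 a_i a_j, ...) + Q f(b2 a_i a_j, ...):
   formally, the Chevalley-Eilenberg differential of the bracket b1 + t b2 with
   the parameter t acting on M as Q.  The Nijenhuis identities say precisely that
   b1 and b2 are compatible Lie brackets (so b1 + t b2 is a Lie bracket), that Q
   commutes with every al x, and that [al x, al y] = al (b1 x y) + Q al (b2 x y).
   The classical proof of d o d = 0 then goes through unchanged: define d by the
   Cartan formula i_x d = L_x - d i_x, show that the Lie derivatives L_x commute
   with d and satisfy [L_x, L_y] = L_(b1 x y) + Q L_(b2 x y), conclude d o d = 0
   by induction on the number of arguments, and check that on alternating
   cochains this d is given by the explicit formula. *)

From HB Require Import structures.
From mathcomp Require Import all_boot all_order all_algebra.
From mathcomp Require Import perm zify.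
From Stdlib Require Import FunctionalExtensionality.
Set Implicit Arguments.
Unset Strict Implicit.
Unset Printing Implicit Defensive.
Import GRing.Theory.
Local Open Scope ring_scope.

Section AbelianGroupExpressions.
Variable V : zmodType.

Inductive zexpr := ZAtom of nat | ZZero | ZAdd of zexpr & zexpr | ZOpp of zexpr.

Fixpoint zeval (env : seq V) (e : zexpr) : V :=
  match e with
  | ZAtom n => nth 0 env n
  | ZZero => 0
  | ZAdd a b => zeval env a + zeval env b
  | ZOpp a => - zeval env a
  end.

Fixpoint addz (s t : seq int) : seq int :=
  match s, t with
  | [::], _ => t
  | _, [::] => s
  | x :: s', y :: t' => (x + y) :: addz s' t'
  end.

Fixpoint zcoeffs (e : zexpr) : seq int :=
  match e with
  | ZAtom n => ncons n 0 [:: 1]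
  | ZZero => [::]
  | ZAdd a b => addz (zcoeffs a) (zcoeffs b)
  | ZOpp a => map -%R (zcoeffs a)
  end.

Fixpoint zcomb (env : seq V) (cs : seq int) : V :=
  if cs is c :: cs' then nth 0 env 0 *~ c + zcomb (behead env) cs' else 0.

Lemma zcomb_addz env s t : zcomb env (addz s t) = zcomb env s + zcomb env t.
Proof.
elim: s env t => [|x s IH] env [|y t] /=; rewrite ?addr0 ?add0r //.
by rewrite IH mulrzDr addrACA.
Qed.

Lemma zcomb_opp env s : zcomb env (map -%R s) = - zcomb env s.
Proof. by elim: s env => [|x s IH] env /=; rewrite ?oppr0 // IH mulrNz opprD. Qed.

Lemma zcomb_atom env n : zcomb env (ncons n 0 [:: 1]) = nth 0 env n.
Proof.
elim: n env => [|n IH] [|x env] /=; rewrite ?mulr0z ?mulr1z ?add0r ?addr0 //.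
by rewrite IH; case: n {IH}.
Qed.

Lemma zeval_zcomb env e : zeval env e = zcomb env (zcoeffs e).
Proof.
elim: e => [n||a IHa b IHb|a IHa] /=; rewrite ?zcomb_atom //.
  by rewrite zcomb_addz IHa IHb.
by rewrite zcomb_opp IHa.
Qed.

Lemma zcomb_eq0 env s : all (eq_op^~ 0) s -> zcomb env s = 0.
Proof.
by elim: s env => [|x s IH] env //= /andP[/eqP-> /IH->]; rewrite mulr0z addr0.
Qed.

Lemma zeval_eq env a b :
  all (eq_op^~ 0) (addz (zcoeffs a) (map -%R (zcoeffs b))) ->
  zeval env a = zeval env b.
Proof.
move=> h; apply/eqP; rewrite -subr_eq0.
by rewrite !zeval_zcomb -zcomb_opp -zcomb_addz zcomb_eq0.
Qed.

End AbelianGroupExpressions.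

(* [abel] proves equalities in a zmodType that hold in every abelian group,
   treating subterms not built from [+], [-] and [0] as atoms (compared
   syntactically, then up to conversion). *)
Ltac abel_index_syn x l :=
  match l with
  | x :: _ => constr:(0%N)
  | _ :: ?l' => let n := abel_index_syn x l' in constr:(S n)
  end.
Ltac abel_index_conv x l :=
  match l with
  | ?y :: _ => let _ := constr:(@erefl _ x : x = y) in constr:(0%N)
  | _ :: ?l' => let n := abel_index_conv x l' in constr:(S n)
  end.
Ltac abel_atoms tac e l :=
  match e with
  | ?a + ?b => let l1 := abel_atoms tac a l in abel_atoms tac b l1
  | - ?a => abel_atoms tac a l
  | GRing.zero => l
  | _ => match constr:(tt) with
         | _ => let n := tac e l in l
         | _ => constr:(e :: l)
         end
  end.
Ltac abel_quote tac e l :=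
  match e with
  | ?a + ?b =>
      let qa := abel_quote tac a l in let qb := abel_quote tac b l in
      constr:(ZAdd qa qb)
  | - ?a => let qa := abel_quote tac a l in constr:(ZOpp qa)
  | GRing.zero => constr:(ZZero)
  | _ => let n := tac e l in constr:(ZAtom n)
  end.
Ltac abel_with tac :=
  match goal with |- @eq ?T ?lhs ?rhs =>
    let l := abel_atoms tac lhs (@nil T) in
    let l := abel_atoms tac rhs l in
    let ql := abel_quote tac lhs l in
    let qr := abel_quote tac rhs l in
    change (zeval l ql = zeval l qr); apply: zeval_eq; vm_compute; reflexivity
  end.
Ltac abel := first [abel_with abel_index_syn | abel_with abel_index_conv].

Section SeqPositions.
Variable T : Type.
Implicit Types (x : T) (s : seq T).

Definition rem_nth (i : nat) s : seq T := take i s ++ drop i.+1 s.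

Lemma rem_nth0 x s : rem_nth 0 (x :: s) = s.
Proof. by rewrite /rem_nth /= drop0. Qed.

Lemma rem_nthS i x s : rem_nth i.+1 (x :: s) = x :: rem_nth i s.
Proof. by []. Qed.

Lemma size_rem_nth i s : (i < size s)%N -> size (rem_nth i s) = (size s).-1.
Proof. by move=> lti; rewrite size_cat size_take lti size_drop; lia. Qed.

Lemma nth_rem_nth (x0 : T) i s k : (i < size s)%N ->
  nth x0 (rem_nth i s) k = nth x0 s (bump i k).
Proof.
move=> lti; rewrite nth_cat size_take lti /bump.
case: (ltnP k i) => [ltki|leik]; first by rewrite nth_take.
by rewrite nth_drop add1n; congr nth; lia.
Qed.

Lemma set_nth_cat (x0 : T) r l j z : set_nth x0 (r ++ l) j z =
  if (j < size r)%N then set_nth x0 r j z ++ l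
  else r ++ set_nth x0 l (j - size r) z.
Proof.
elim: r j => [|a r IH] j /=; first by rewrite subn0.
by case: j => [|j] //=; rewrite IH ltnS subSS; case: ifP.
Qed.

Lemma set_set_nth_same (x0 : T) s j v w :
  set_nth x0 (set_nth x0 s j v) j w = set_nth x0 s j w.
Proof. by rewrite set_set_nth eqxx. Qed.

Lemma set_set_nthC {x0 : T} {s j k v w} : k != j ->
  set_nth x0 (set_nth x0 s j v) k w = set_nth x0 (set_nth x0 s k w) j v.
Proof. by move=> nekj; rewrite set_set_nth eq_sym (negbTE nekj). Qed.

Lemma cat_swap_set_nth (x0 : T) r u v w :
  r ++ v :: u :: w =
  set_nth x0 (set_nth x0 (r ++ u :: v :: w) (size r) v) (size r).+1 u.
Proof. by elim: r => [|x r IH] //=; rewrite IH. Qed.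

End SeqPositions.

Section Bilinear.
Variables (K : fieldType) (U V W : lmodType K) (b : U -> V -> W).
Hypothesis b_bilin : bilinear_map b.

Lemma bilinDl u1 u2 v : b (u1 + u2) v = b u1 v + b u2 v.
Proof. by have := b_bilin.1 1 u1 u2 v; rewrite !scale1r. Qed.

Lemma bilinDr u v1 v2 : b u (v1 + v2) = b u v1 + b u v2.
Proof. by have := b_bilin.2 1 u v1 v2; rewrite !scale1r. Qed.

Lemma bilin0l v : b 0 v = 0.
Proof. by apply: (addrI (b 0 v)); rewrite -bilinDl !addr0. Qed.

Lemma bilin0r u : b u 0 = 0.
Proof. by apply: (addrI (b u 0)); rewrite -bilinDr !addr0. Qed.

Lemma bilinNl u v : b (- u) v = - b u v.
Proof. by apply/eqP; rewrite -addr_eq0 -bilinDl addNr bilin0l. Qed.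

Lemma bilinNr u v : b u (- v) = - b u v.
Proof. by apply/eqP; rewrite -addr_eq0 -bilinDr addNr bilin0r. Qed.

End Bilinear.

Definition jacobiator (V : zmodType) (br : V -> V -> V) (a b c : V) : V :=
  br a (br b c) + br b (br c a) + br c (br a b).

Lemma leibniz_of_jacobiator (V : zmodType) (br : V -> V -> V) :
  (forall a b, br b a = - br a b) -> (forall a b, br a (- b) = - br a b) ->
  (forall a b c, jacobiator br a b c = 0) ->
  forall a b c, br (br a b) c = br a (br b c) - br b (br a c).
Proof.
move=> skew oppr jac a b c; apply/eqP; rewrite -subr_eq0 -oppr_eq0 -(jac a b c).
by rewrite /jacobiator (skew (br a b)) (skew c a) oppr; apply/eqP; abel.
Qed.

Section CartanDifferential.
Variables (K : fieldType) (g : zmodType) (M : lmodType K).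
Variables (al : g -> M -> M) (Q : {additive M -> M}) (b1 b2 : g -> g -> g).
Hypothesis alD : forall x, {morph al x : u v / u + v}.
Hypothesis Q_al : forall x u, Q (al x u) = al x (Q u).
Hypothesis al_comm : forall x y u,
  al x (al y u) - al y (al x u) = al (b1 x y) u + Q (al (b2 x y) u).
Hypothesis b1_leibniz : forall x y z,
  b1 (b1 x y) z = b1 x (b1 y z) - b1 y (b1 x z).
Hypothesis b2_leibniz : forall x y z,
  b2 (b2 x y) z = b2 x (b2 y z) - b2 y (b2 x z).
Hypothesis b12_compat : forall x y z,
  b1 (b2 x y) z + b2 (b1 x y) z =
  b1 x (b2 y z) + b2 x (b1 y z) - b1 y (b2 x z) - b2 y (b1 x z).
Hypothesis b1_skew : forall x y, b1 y x = - b1 x y.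
Hypothesis b2_skew : forall x y, b2 y x = - b2 x y.

Implicit Types (x y : g) (u v : M) (s t : seq g) (F G : seq g -> M).

Lemma al0 x : al x 0 = 0.
Proof. by apply: (addrI (al x 0)); rewrite -alD !addr0. Qed.

Lemma alN x u : al x (- u) = - al x u.
Proof. by apply/eqP; rewrite -addr_eq0 -alD addNr al0. Qed.

Definition contract x F : seq g -> M := fun t => F (x :: t).

Definition slot F t j : g -> M := fun w => F (set_nth 0 t j w).

Definition bracket_args x F t : M :=
  \sum_(0 <= j < size t) (slot F t j (b1 x t`_j) + Q (slot F t j (b2 x t`_j))).

Definition lie_deriv x F t : M := al x (F t) - bracket_args x F t.

(* Defined by the Cartan formula i_x d = L_x - d i_x. *)
Fixpoint cartan_diff F s {struct s} : M :=
  if s is x :: t then lie_deriv x F t - cartan_diff (contract x F) t else 0.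

Section Morphism.
Variable h : M -> M.
Hypothesis hD : {morph h : u v / u + v}.
Hypothesis hQ : forall u, h (Q u) = Q (h u).

Let h0 : h 0 = 0.
Proof. by apply: (addrI (h 0)); rewrite -hD !addr0. Qed.

Let hN u : h (- u) = - h u.
Proof. by apply/eqP; rewrite -addr_eq0 -hD addNr h0. Qed.

Lemma bracket_args_morph x F t :
  bracket_args x (fun t => h (F t)) t = h (bracket_args x F t).
Proof.
by rewrite /bracket_args (big_morph h hD h0); apply: eq_bigr => j _; rewrite hD hQ.
Qed.

Hypothesis h_al : forall x u, h (al x u) = al x (h u).

Lemma lie_deriv_morph x F t : lie_deriv x (fun t => h (F t)) t = h (lie_deriv x F t).
Proof. by rewrite /lie_deriv bracket_args_morph hD hN h_al. Qed.

Lemma cartan_diff_morph F s : cartan_diff (fun t => h (F t)) s = h (cartan_diff F s).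
Proof.
elim: s F => [|x t IH] F /=; first by rewrite h0.
by rewrite lie_deriv_morph (IH (contract x F)) hD hN.
Qed.

End Morphism.

Lemma bracket_args_al x y F t :
  bracket_args x (fun t => al y (F t)) t = al y (bracket_args x F t).
Proof. by apply: bracket_args_morph => // u; rewrite Q_al. Qed.

Lemma bracket_argsN x F t :
  bracket_args x (fun t => - F t) t = - bracket_args x F t.
Proof. by apply: bracket_args_morph => [u v|u]; rewrite ?opprD ?raddfN. Qed.

Lemma lie_derivN x F t : lie_deriv x (fun t => - F t) t = - lie_deriv x F t.
Proof. by apply: lie_deriv_morph => [u v|u|y u]; rewrite ?opprD ?raddfN ?alN. Qed.

Lemma cartan_diffN F s : cartan_diff (fun t => - F t) s = - cartan_diff F s.
Proof. by apply: cartan_diff_morph => [u v|u|y u]; rewrite ?opprD ?raddfN ?alN. Qed.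

Lemma cartan_diffQ F s : cartan_diff (fun t => Q (F t)) s = Q (cartan_diff F s).
Proof. by apply: cartan_diff_morph => [u v|u|y u]; rewrite ?raddfD ?Q_al. Qed.

Lemma bracket_argsD x F G t :
  bracket_args x (fun t => F t + G t) t = bracket_args x F t + bracket_args x G t.
Proof. by rewrite /bracket_args /slot -big_split; apply: eq_bigr => j _ /=; rewrite raddfD; abel. Qed.

Lemma lie_derivD x F G t :
  lie_deriv x (fun t => F t + G t) t = lie_deriv x F t + lie_deriv x G t.
Proof. by rewrite /lie_deriv bracket_argsD alD; abel. Qed.

Lemma cartan_diffD F G s :
  cartan_diff (fun t => F t + G t) s = cartan_diff F s + cartan_diff G s.
Proof.
elim: s F G => [|x t IH] F G /=; first by rewrite addr0.
by rewrite lie_derivD (IH (contract x F) (contract x G)); abel.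
Qed.

Lemma lie_deriv_cons x y F t : lie_deriv x F (y :: t) =
  lie_deriv x (contract y F) t - (F (b1 x y :: t) + Q (F (b2 x y :: t))).
Proof. by rewrite /contract /lie_deriv /bracket_args /= big_nat_recl //=; abel. Qed.

Lemma contract_cartan_diff y F :
  contract y (cartan_diff F) = fun t => lie_deriv y F t - cartan_diff (contract y F) t.
Proof. by []. Qed.

Definition slot_additive F := forall t j, (j < size t)%N ->
  {morph slot F t j : v w / v + w}.

Lemma slot0 F t j : slot_additive F -> (j < size t)%N -> slot F t j 0 = 0.
Proof. by move=> F_add ltj; apply: (addrI (slot F t j 0)); rewrite -F_add // !addr0. Qed.

Lemma slotN F t j w : slot_additive F -> (j < size t)%N ->
  slot F t j (- w) = - slot F t j w.
Proof. by move=> F_add ltj; apply/eqP; rewrite -addr_eq0 -F_add // addNr slot0. Qed.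

Lemma contract_slot_additive x F : slot_additive F -> slot_additive (contract x F).
Proof. by move=> F_add t j ltj; apply: (F_add (x :: t) j.+1). Qed.

Lemma bracket_args_set x F t j w : (j < size t)%N ->
  bracket_args x F (set_nth 0 t j w) =
  slot F t j (b1 x w) + Q (slot F t j (b2 x w)) +
  \sum_(0 <= k < size t | k != j)
     (slot F (set_nth 0 t k (b1 x t`_k)) j w +
      Q (slot F (set_nth 0 t k (b2 x t`_k)) j w)).
Proof.
move=> ltj; rewrite /bracket_args size_set_nth (maxn_idPr ltj).
rewrite (bigD1_seq j) ?mem_index_iota ?iota_uniq //= nth_set_nth /= eqxx.
rewrite /slot !set_set_nth_same; congr (_ + _); apply: eq_bigr => k nekj.
by rewrite nth_set_nth /= (negbTE nekj) !(set_set_nthC nekj).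
Qed.

Definition diag_term F x y t j : M :=
  let z := t`_j in
  slot F t j (b1 y (b1 x z)) + Q (slot F t j (b2 y (b1 x z))) +
  Q (slot F t j (b1 y (b2 x z)) + Q (slot F t j (b2 y (b2 x z)))).

Definition cross_term F x y t j k : M :=
  let tk1 := set_nth 0 t k (b1 y t`_k) in
  let tk2 := set_nth 0 t k (b2 y t`_k) in
  slot F tk1 j (b1 x t`_j) + Q (slot F tk2 j (b1 x t`_j)) +
  Q (slot F tk1 j (b2 x t`_j) + Q (slot F tk2 j (b2 x t`_j))).

Lemma bracket_args2 x y F t : bracket_args x (bracket_args y F) t =
  \sum_(0 <= j < size t) diag_term F x y t j +
  \sum_(0 <= j < size t) \sum_(0 <= k < size t | k != j) cross_term F x y t j k.
Proof.
rewrite {1}/bracket_args {1 2}/slot -big_split; apply: eq_big_nat => j /andP[_ ltj].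
rewrite !bracket_args_set // raddfD raddf_sum [in RHS]big_split /=.
by rewrite addrACA.
Qed.

Lemma cross_term_swap x y F t j k : k != j ->
  cross_term F x y t j k = cross_term F y x t k j.
Proof.
move=> nekj; rewrite /cross_term /slot !(set_set_nthC nekj).
by rewrite !raddfD; abel.
Qed.

Lemma sum_cross_term_swap x y F t :
  \sum_(0 <= j < size t) \sum_(0 <= k < size t | k != j) cross_term F x y t j k =
  \sum_(0 <= j < size t) \sum_(0 <= k < size t | k != j) cross_term F y x t j k.
Proof.
under eq_bigr do rewrite big_mkcond.
rewrite exchange_big_nat; apply: eq_bigr => j _; rewrite [RHS]big_mkcond.
apply: eq_bigr => k _; rewrite eq_sym; case: ifP => // nekj.
by rewrite cross_term_swap // eq_sym.
Qed.

(* The cross terms of the two double sums cancel; the diagonal terms reduce to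
   the bracket by the Jacobi identities, applied inside one argument slot. *)
Lemma bracket_args_comm x y F t : slot_additive F ->
  bracket_args x (bracket_args y F) t - bracket_args y (bracket_args x F) t =
  - bracket_args (b1 x y) F t - Q (bracket_args (b2 x y) F t).
Proof.
move=> F_add; rewrite !bracket_args2 sum_cross_term_swap.
suff : \sum_(0 <= j < size t) diag_term F x y t j
     - \sum_(0 <= j < size t) diag_term F y x t j
     + bracket_args (b1 x y) F t + Q (bracket_args (b2 x y) F t) = 0.
  by move=> h; apply/eqP; rewrite -subr_eq0; apply/eqP/(eq_trans _ h); abel.
rewrite /bracket_args (raddf_sum Q) -sumrB -!big_split big1_seq //= => j.
rewrite mem_index_iota => /andP[_ ltj].
set z := t`_j; have F_addj := F_add t j ltj.
have F_oppj w : slot F t j (- w) = - slot F t j w by exact: slotN.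
have leibniz1 : slot F t j (b1 (b1 x y) z) =
    slot F t j (b1 x (b1 y z)) - slot F t j (b1 y (b1 x z)).
  by rewrite b1_leibniz F_addj F_oppj.
have leibniz2 : slot F t j (b2 (b2 x y) z) =
    slot F t j (b2 x (b2 y z)) - slot F t j (b2 y (b2 x z)).
  by rewrite b2_leibniz F_addj F_oppj.
have compat12 : slot F t j (b1 (b2 x y) z) =
    slot F t j (b1 x (b2 y z) + b2 x (b1 y z) - b1 y (b2 x z) - b2 y (b1 x z))
    - slot F t j (b2 (b1 x y) z).
  by rewrite -b12_compat F_addj addrK.
rewrite /diag_term -/z leibniz1 compat12 leibniz2 !F_addj !F_oppj !(raddfD Q) !(raddfN Q); abel.
Qed.

Lemma lie_deriv_comm x y F t : slot_additive F ->
  lie_deriv x (lie_deriv y F) t - lie_deriv y (lie_deriv x F) t =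
  lie_deriv (b1 x y) F t + Q (lie_deriv (b2 x y) F t).
Proof.
move=> F_add; rewrite /lie_deriv !bracket_argsD !bracket_argsN !bracket_args_al.
rewrite !alD !alN (raddfD Q) (raddfN Q) (canRL (subrK _) (al_comm x y (F t))).
by rewrite (canRL (subrK _) (bracket_args_comm x y t F_add)); abel.
Qed.

Lemma lie_deriv_cartan x F s : slot_additive F ->
  lie_deriv x (cartan_diff F) s = cartan_diff (lie_deriv x F) s.
Proof.
elim: s x F => [|y t IH] x F F_add.
  by rewrite /lie_deriv /bracket_args /= big_geq // al0 subr0.
have F_add_y := contract_slot_additive y F_add.
have contract_lie : contract y (lie_deriv x F) = fun t =>
    lie_deriv x (contract y F) t - (F (b1 x y :: t) + Q (F (b2 x y :: t))).
  by apply: functional_extensionality => u; rewrite /contract lie_deriv_cons.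
rewrite lie_deriv_cons contract_cartan_diff lie_derivD lie_derivN IH //=.
rewrite contract_lie cartan_diffD cartan_diffN cartan_diffD cartan_diffQ.
rewrite (canRL (subrK _) (lie_deriv_comm x y t F_add)) /contract.
by rewrite (raddfB Q (lie_deriv _ _ _)); abel.
Qed.

Lemma cartan_diff2 F s : slot_additive F -> cartan_diff (cartan_diff F) s = 0.
Proof.
elim: s F => [|y t IH] F F_add //=.
rewrite lie_deriv_cartan // contract_cartan_diff cartan_diffD cartan_diffN (IH (contract y F)).
  by rewrite oppr0 addr0 subrr.
exact: contract_slot_additive.
Qed.

Definition alternating_seq F :=
  forall r (u v : g) w, F (r ++ u :: v :: w) = - F (r ++ v :: u :: w).

Lemma bracket_args_alternating x F :
  alternating_seq F -> alternating_seq (bracket_args x F).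
Proof.
move=> F_alt r u v w; pose n := size (r ++ u :: v :: w).
have size_swap : size (r ++ v :: u :: w) = n by rewrite /n !size_cat.
have ltp1 : ((size r).+1 < n)%N by rewrite /n size_cat /= !addnS !ltnS leq_addr.
have ltp : (size r < n)%N by apply: ltnW.
pose tau := tperm (Ordinal ltp) (Ordinal ltp1).
rewrite /bracket_args /slot size_swap !big_mkord -sumrN (reindex_inj (@perm_inj _ tau)).
apply: eq_bigr => j _ /=.
suff [F_tau nth_tau] : (forall z, F (set_nth 0 (r ++ u :: v :: w) (tau j) z) =
                                  - F (set_nth 0 (r ++ v :: u :: w) j z))
    /\ (r ++ u :: v :: w)`_(tau j) = (r ++ v :: u :: w)`_j.
  by rewrite !F_tau nth_tau raddfN opprD.
rewrite /tau; case: tpermP => [->|->|/eqP nej0 /eqP nej1] /=.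
- by split=> [z|]; rewrite ?(set_nth_cat 0 r) ?(nth_cat 0 r) ltnn subnn ltnNge leqnSn subSnn //= F_alt.
- by split=> [z|]; rewrite ?(set_nth_cat 0 r) ?(nth_cat 0 r) ltnn subnn ltnNge leqnSn subSnn //= F_alt.
have [ltjr|lerj] := ltnP j (size r).
  by split=> [z|]; rewrite ?(set_nth_cat 0 r) ?(nth_cat 0 r) ltjr // F_alt.
have j_r : (j - size r = (j - size r - 2).+2)%N.
  by move: nej0 nej1 lerj; rewrite -!val_eqE /= => /eqP ? /eqP ? ?; lia.
by split=> [z|]; rewrite ?(set_nth_cat 0 r) ?(nth_cat 0 r) ltnNge lerj /= j_r //= F_alt.
Qed.

Lemma lie_deriv_alternating x F :
  alternating_seq F -> alternating_seq (lie_deriv x F).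
Proof.
move=> F_alt r u v w.
by rewrite /lie_deriv F_alt alN (bracket_args_alternating x F_alt); abel.
Qed.

Lemma contract_alternating x F : alternating_seq F -> alternating_seq (contract x F).
Proof. by move=> F_alt r u v w; rewrite /contract -!cat_cons F_alt. Qed.

Lemma cartan_diff_alternating F :
  alternating_seq F -> slot_additive F -> alternating_seq (cartan_diff F).
Proof.
move=> F_alt F_add r; elim: r F F_alt F_add => [|x r IH] F F_alt F_add u v w /=.
  have F_oppl a : F (- a :: w) = - F (a :: w).
    exact: (slotN (t := a :: w) (j := 0) a F_add).
  have contract_swap : contract v (contract u F) = fun t => - contract u (contract v F) t.
    by apply: functional_extensionality => t; rewrite /contract (F_alt [::]).
  rewrite !lie_deriv_cons contract_swap cartan_diffN (b1_skew u v) (b2_skew u v).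
  by rewrite !F_oppl (raddfN Q); abel.
rewrite (lie_deriv_alternating x F_alt) IH //.
- by abel.
- exact: contract_alternating.
- exact: contract_slot_additive.
Qed.

Lemma alternating_set_nth F r t j w : alternating_seq F -> (j < size t)%N ->
  F (r ++ set_nth 0 t j w) = (-1) ^+ j *: F (r ++ w :: rem_nth j t).
Proof.
move=> F_alt; elim: j t r => [|j IH] [|t0 t] r //= ltj.
  by rewrite expr0 scale1r rem_nth0.
by rewrite -cat_rcons IH // cat_rcons F_alt exprS mulN1r scaleNr scalerN.
Qed.

Definition ce_diff_seq F s : M :=
  \sum_(0 <= i < size s) (-1) ^+ i *: al s`_i (F (rem_nth i s)) +
  \sum_(0 <= i < size s) \sum_(0 <= j < size s | (i < j)%N)
     (-1) ^+ (i + j) *: (F (b1 s`_i s`_j :: rem_nth i (rem_nth j s)) +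
                         Q (F (b2 s`_i s`_j :: rem_nth i (rem_nth j s)))).

Lemma ce_diff_seq_cons F x t : ce_diff_seq F (x :: t) =
  al x (F t)
  - \sum_(0 <= i < size t) (-1) ^+ i *: al t`_i (F (x :: rem_nth i t))
  - \sum_(0 <= j < size t) (-1) ^+ j *:
       (F (b1 x t`_j :: rem_nth j t) + Q (F (b2 x t`_j :: rem_nth j t)))
  + \sum_(0 <= i < size t) \sum_(0 <= j < size t | (i < j)%N)
     (-1) ^+ (i + j) *: (F (b1 t`_i t`_j :: x :: rem_nth i (rem_nth j t)) +
                         Q (F (b2 t`_i t`_j :: x :: rem_nth i (rem_nth j t)))).
Proof.
rewrite /ce_diff_seq /= !big_nat_recl //= expr0 scale1r rem_nth0.
have shift_act : \sum_(0 <= i < size t) (-1) ^+ i.+1 *: al (x :: t)`_i.+1 (F (rem_nth i.+1 (x :: t)))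
   = - \sum_(0 <= i < size t) (-1) ^+ i *: al t`_i (F (x :: rem_nth i t)).
  by rewrite -sumrN; apply: eq_bigr => i _; rewrite exprS mulN1r scaleNr.
have first_row : \sum_(0 <= j < (size t).+1 | (0 < j)%N) (-1) ^+ (0 + j) *:
     (F (b1 (x :: t)`_0 (x :: t)`_j :: rem_nth 0 (rem_nth j (x :: t))) +
      Q (F (b2 (x :: t)`_0 (x :: t)`_j :: rem_nth 0 (rem_nth j (x :: t)))))
   = - \sum_(0 <= j < size t) (-1) ^+ j *:
       (F (b1 x t`_j :: rem_nth j t) + Q (F (b2 x t`_j :: rem_nth j t))).
  rewrite big_mkcond big_nat_recl //= add0r -sumrN; apply: eq_bigr => j _.
  by rewrite exprS mulN1r scaleNr rem_nthS rem_nth0.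
have other_rows i : \sum_(0 <= j < (size t).+1 | (i.+1 < j)%N) (-1) ^+ (i.+1 + j) *:
     (F (b1 (x :: t)`_i.+1 (x :: t)`_j :: rem_nth i.+1 (rem_nth j (x :: t))) +
      Q (F (b2 (x :: t)`_i.+1 (x :: t)`_j :: rem_nth i.+1 (rem_nth j (x :: t)))))
   = \sum_(0 <= j < size t | (i < j)%N) (-1) ^+ (i + j) *:
     (F (b1 t`_i t`_j :: x :: rem_nth i (rem_nth j t)) +
      Q (F (b2 t`_i t`_j :: x :: rem_nth i (rem_nth j t)))).
  rewrite big_mkcond big_nat_recl //= add0r [RHS]big_mkcond.
  apply: eq_bigr => j _; rewrite ltnS; case: ifP => // _.
  by rewrite addSn addnS !exprS !mulN1r opprK.
by rewrite shift_act first_row (eq_bigr _ (fun i _ => other_rows i)); abel.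
Qed.

Lemma bracket_args_front x F t : alternating_seq F ->
  bracket_args x F t = \sum_(0 <= j < size t) (-1) ^+ j *:
    (F (b1 x t`_j :: rem_nth j t) + Q (F (b2 x t`_j :: rem_nth j t))).
Proof.
move=> F_alt; apply: eq_big_nat => j /andP[_ ltj].
have F_front z : slot F t j z = (-1) ^+ j *: F (z :: rem_nth j t).
  exact: (alternating_set_nth [::] z F_alt ltj).
by rewrite !F_front raddfZsign scalerDr.
Qed.

Lemma ce_diff_seq_contract x F t : alternating_seq F ->
  ce_diff_seq (contract x F) t =
  \sum_(0 <= i < size t) (-1) ^+ i *: al t`_i (F (x :: rem_nth i t)) -
  \sum_(0 <= i < size t) \sum_(0 <= j < size t | (i < j)%N)
     (-1) ^+ (i + j) *: (F (b1 t`_i t`_j :: x :: rem_nth i (rem_nth j t)) +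
                         Q (F (b2 t`_i t`_j :: x :: rem_nth i (rem_nth j t)))).
Proof.
move=> F_alt; rewrite /ce_diff_seq /contract; congr (_ + _).
rewrite -sumrN; apply: eq_bigr => i _; rewrite -sumrN; apply: eq_bigr => j _.
by rewrite !(F_alt [::] x) (raddfN Q) -opprD scalerN.
Qed.

Lemma ce_diff_seq_cartan F s : alternating_seq F -> ce_diff_seq F s = cartan_diff F s.
Proof.
elim: s F => [|x t IH] F F_alt; first by rewrite /ce_diff_seq /= !big_geq // addr0.
rewrite ce_diff_seq_cons /= -IH; last exact: contract_alternating.
by rewrite ce_diff_seq_contract // /lie_deriv bracket_args_front //; abel.
Qed.

Lemma ce_diff_seq2 F s : alternating_seq F -> slot_additive F ->
  ce_diff_seq (ce_diff_seq F) s = 0.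
Proof.
move=> F_alt F_add.
have -> : ce_diff_seq F = cartan_diff F.
  by apply: functional_extensionality => t; apply: ce_diff_seq_cartan.
by rewrite ce_diff_seq_cartan ?cartan_diff2 //; apply: cartan_diff_alternating.
Qed.

Lemma ce_diff_seq_eq0 F s : (forall t, (size t).+1 = size s -> F t = 0) ->
  ce_diff_seq F s = 0.
Proof.
move=> F0; rewrite /ce_diff_seq big1_seq ?add0r => [|i]; last first.
  rewrite mem_index_iota => /andP[_ lti].
  by rewrite F0 ?al0 ?scaler0 // size_rem_nth //; lia.
apply: big1_seq => i /andP[_]; rewrite mem_index_iota => /andP[_ lti].
apply: big1_seq => j /andP[ltij]; rewrite mem_index_iota => /andP[_ ltj].
have lti' : (i < size (rem_nth j s))%N by rewrite size_rem_nth //; lia.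
by rewrite !F0 ?raddf0 ?addr0 ?scaler0 //= (size_rem_nth lti') size_rem_nth //; lia.
Qed.

End CartanDifferential.

Section NijenhuisData.
Variables (K : fieldType) (g M : lmodType K) (br : g -> g -> g) (act : g -> M -> M)
  (P : {linear g -> g}) (PM : {linear M -> M}).
Hypotheses (br_lie : is_lie_bracket br) (act_rep : is_lie_rep br act)
  (P_nij : is_nijenhuis_op br P) (PM_nij : is_nijenhuis_rep P act PM).

Local Notation brP := (nij_bracket P br).

Let br_bilin : bilinear_map br. Proof. by case: br_lie. Qed.
Let act_bilin : bilinear_map act. Proof. by case: act_rep. Qed.
Let act_br a b x : act (br a b) x = act a (act b x) - act b (act a x).
Proof. by case: act_rep. Qed.

Let brDl := bilinDl br_bilin.
Let brDr := bilinDr br_bilin.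
Let brNl := bilinNl br_bilin.
Let brNr := bilinNr br_bilin.
Let actDl := bilinDl act_bilin.
Let actDr := bilinDr act_bilin.
Let actNl := bilinNl act_bilin.
Let actNr := bilinNr act_bilin.

Lemma lie_skew a b : br b a = - br a b.
Proof.
have [_ alt _] := br_lie; have := alt (a + b).
rewrite brDl !brDr !alt add0r addr0 => /eqP.
by rewrite addrC addr_eq0 => /eqP.
Qed.

Lemma lie_leibniz a b c : br (br a b) c = br a (br b c) - br b (br a c).
Proof.
apply: leibniz_of_jacobiator => [|{}a {}b|{}a {}b {}c]; first exact: lie_skew.
  exact: brNr.
by case: br_lie => _ _; apply.
Qed.

Lemma nij_skew a b : brP b a = - brP a b.
Proof. by rewrite /nij_bracket !(lie_skew _ a) (lie_skew b) linearN; abel. Qed.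

(* The Nijenhuis identity is used twice: on P [x,y]_P and on [P [x,y], P z]. *)
Lemma nij_nij_expand x y z : brP (brP x y) z =
  br (br (P x) (P y)) z + br (br (P x) y) (P z) + br (br x (P y)) (P z)
  - P (br (br x y) (P z)) + P (P (br (br x y) z))
  - P (br (br (P x) y) z) - P (br (br x (P y)) z).
Proof.
rewrite {1}/nij_bracket -P_nij /nij_bracket !brDl !brNl (P_nij (br x y) z).
by rewrite /nij_bracket !(linearD P) !(linearN P); abel.
Qed.

Lemma nij_jacobiator x y z : jacobiator brP x y z = 0.
Proof.
have -> : jacobiator brP x y z =
    jacobiator br (P x) (P y) z + jacobiator br (P y) (P z) x
  + jacobiator br (P z) (P x) y
  - P (jacobiator br x y (P z) + jacobiator br y z (P x) + jacobiator br z x (P y))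
  + P (P (jacobiator br x y z)).
  rewrite {1}/jacobiator !(nij_skew (brP _ _)) !nij_nij_expand /jacobiator.
  by rewrite !(lie_skew _ (br _ _)) !(linearD P) !(linearN P); abel.
by case: br_lie => _ _ jac; rewrite /jacobiator !jac !addr0 !linear0 ?subr0 ?addr0.
Qed.

Lemma nij_leibniz a b c : brP (brP a b) c = brP a (brP b c) - brP b (brP a c).
Proof.
apply: leibniz_of_jacobiator => [|{}a {}b|]; [exact: nij_skew| |exact: nij_jacobiator].
by rewrite /nij_bracket !brNr !(linearN P) brNr; abel.
Qed.

Lemma nij_lie_compat x y z :
  brP (br x y) z + br (brP x y) z =
  brP x (br y z) + br x (brP y z) - brP y (br x z) - br y (brP x z).
Proof.
rewrite /nij_bracket !brDl !brDr !brNl !brNr !lie_leibniz !(linearD P) !(linearN P).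
by abel.
Qed.

Definition njo_act (x : g) (u : M) : M := act (P x) u - PM (act x u).

Lemma njo_actD x : {morph njo_act x : u v / u + v}.
Proof. by move=> u v; rewrite /njo_act !actDr (linearD PM); abel. Qed.

Lemma njo_act_PM x u : - PM (njo_act x u) = njo_act x (- PM u).
Proof. by rewrite /njo_act !actNr PM_nij !(linearD PM) !(linearN PM); abel. Qed.

Lemma njo_act_comm x y u :
  njo_act x (njo_act y u) - njo_act y (njo_act x u) =
  njo_act (brP x y) u - PM (njo_act (br x y) u).
Proof.
rewrite /njo_act !actDr !actNr !PM_nij -P_nij /nij_bracket.
by rewrite !actDl !actNl !act_br !(linearD PM) !(linearN PM) (linearB PM); abel.
Qed.

End NijenhuisData.

Section SeqCochain.
Variables (K : fieldType) (g M : lmodType K) (n : nat) (f : ('I_n -> g) -> M).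
Hypotheses (f_lin : multilinear f) (f_alt : alternating f).

Definition seq_cochain (s : seq g) : M :=
  if size s == n then f (fun k => s`_k) else 0.

Let fD a i x y : f (upd a i (x + y)) = f (upd a i x) + f (upd a i y).
Proof. by have := f_lin a i 1 x y; rewrite !scale1r. Qed.

Lemma upd_upd_swap (a : 'I_n -> g) i j x y : i != j ->
  upd (upd a i x) j y = upd (upd a j y) i x.
Proof.
move=> neij; apply: functional_extensionality => k; rewrite /upd.
by case: (eqVneq k j) => [->|//]; rewrite eq_sym (negbTE neij).
Qed.

Lemma alternating_upd_swap (a : 'I_n -> g) i j x y : i != j ->
  f (upd (upd a i x) j y) = - f (upd (upd a i y) j x).
Proof.
move=> neij; have neji : j != i by rewrite eq_sym.
have diag z : f (upd (upd a i z) j z) = 0.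
  by apply: (f_alt neij); rewrite /upd (negbTE neij) !eqxx.
apply/eqP; rewrite -addr_eq0; apply/eqP.
have := diag (x + y); rewrite fD !(upd_upd_swap _ _ _ neij) !fD.
by rewrite !(upd_upd_swap _ _ _ neji) !diag add0r addr0 addrC.
Qed.

Lemma upd_id (a : 'I_n -> g) i : upd a i (a i) = a.
Proof. by apply: functional_extensionality => k; rewrite /upd; case: eqP => [->|]. Qed.

Lemma seq_cochain_slot_additive : slot_additive seq_cochain.
Proof.
move=> t j ltj u v; rewrite /slot /seq_cochain !size_set_nth (maxn_idPr ltj).
case: eqP => [size_t|_]; last by rewrite addr0.
have ltjn : (j < n)%N by rewrite -size_t.
have set_upd z : (fun k : 'I_n => (set_nth 0 t j z)`_k) = upd (fun k => t`_k) (Ordinal ltjn) z.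
  by apply: functional_extensionality => k; rewrite /upd nth_set_nth /= -val_eqE.
by rewrite !set_upd fD.
Qed.

Lemma seq_cochain_alternating : alternating_seq seq_cochain.
Proof.
move=> r u v w; rewrite /seq_cochain !size_cat /=.
case: eqP => [size_n|_]; last by rewrite oppr0.
have lt1 : ((size r).+1 < n)%N by rewrite -size_n !addnS !ltnS leq_addr.
have lt0 : (size r < n)%N by apply: ltnW.
pose a := fun k : 'I_n => (r ++ u :: v :: w)`_k.
have a0 : a (Ordinal lt0) = u by rewrite /a /= nth_cat ltnn subnn.
have a1 : a (Ordinal lt1) = v by rewrite /a /= nth_cat ltnNge leqnSn subSnn.
have swap_upd : (fun k : 'I_n => (r ++ v :: u :: w)`_k) =
    upd (upd a (Ordinal lt0) v) (Ordinal lt1) u.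
  by apply: functional_extensionality => k; rewrite (cat_swap_set_nth 0) nth_set_nth /= nth_set_nth /upd -!val_eqE.
have a_upd : a = upd (upd a (Ordinal lt0) u) (Ordinal lt1) v.
  by rewrite -{1}a0 upd_id -a1 upd_id.
by rewrite swap_upd -/a {1}a_upd alternating_upd_swap // -val_eqE /= ltn_eqF.
Qed.

End SeqCochain.

Lemma bump_lt i k n : (k < n)%N -> (bump i k < n.+1)%N.
Proof. by rewrite /bump; case: (i <= k)%N => /=; lia. Qed.

Lemma remidx_bump i j k : (i < j)%N -> remidx i j k = bump j (bump i k).
Proof.
move=> ltij; rewrite /remidx /bump.
case: (leqP i k) => [leik|ltki]; first by case: (leqP j k.+1).
by rewrite /= leqNgt (ltn_trans ltki ltij).
Qed.

Section NjoSeq.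
Variables (K : fieldType) (g M : lmodType K) (br : g -> g -> g) (act : g -> M -> M)
  (P : {linear g -> g}) (PM : {linear M -> M}).

Local Notation njo_seq :=
  (ce_diff_seq (njo_act act P PM) (\- PM) (nij_bracket P br) br).

Lemma njo_diff_seqE m (G : ('I_m -> g) -> M) (a : 'I_m.+1 -> g) :
  njo_diff br act P PM G a = njo_seq (seq_cochain G) (mkseq (fun k => a (inord k)) m.+1).
Proof.
set s := mkseq _ _.
have size_s : size s = m.+1 by rewrite size_mkseq.
have nth_s (i : 'I_m.+1) : s`_i = a i by rewrite nth_mkseq // inord_val.
have skip (i : 'I_m.+1) : seq_cochain G (rem_nth i s) = G (skip1 a i).
  rewrite /seq_cochain size_rem_nth size_s //= eqxx; congr G.
  apply: functional_extensionality => k; rewrite nth_rem_nth ?size_s // nth_mkseq ?bump_lt //.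
  by rewrite /skip1; congr a; apply: val_inj; rewrite /= inordK // bump_lt.
have arg2 (b : g -> g -> g) (i j : 'I_m.+1) : (i < j)%N ->
    seq_cochain G (b s`_i s`_j :: rem_nth i (rem_nth j s)) = G (ce_arg2 b a i j).
  move=> ltij; have ltj : (j < size s)%N by rewrite size_s.
  have lti : (i < size (rem_nth j s))%N by rewrite size_rem_nth // size_s /=; lia.
  have m_gt0 : (0 < m)%N by lia.
  rewrite /seq_cochain /= (size_rem_nth lti) (size_rem_nth ltj) size_s /= prednK // eqxx.
  congr G; apply: functional_extensionality => -[[|k] ltk]; rewrite /ce_arg2 /= ?nth_s //.
  rewrite !nth_rem_nth // -remidx_bump // nth_mkseq //.
  by rewrite /remidx; case: ifP => _; [|case: ifP => _]; lia.
rewrite /njo_diff /ce_diff /ce_diff_seq size_s !big_mkord.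
have act_part : \sum_(i < m.+1) (-1) ^+ i *: njo_act act P PM s`_i (seq_cochain G (rem_nth i s)) =
  \sum_(i < m.+1) (-1) ^+ i *: act (P (a i)) (G (skip1 a i)) -
  PM (\sum_(i < m.+1) (-1) ^+ i *: act (a i) (G (skip1 a i))).
  by rewrite linear_sum -sumrB; apply: eq_bigr => i _; rewrite nth_s skip /njo_act scalerBr (linearZZ PM).
have bracket_part : \sum_(i < m.+1) \sum_(0 <= j < m.+1 | (i < j)%N) (-1) ^+ (i + j) *:
    (seq_cochain G (nij_bracket P br s`_i s`_j :: rem_nth i (rem_nth j s)) +
     (\- PM) (seq_cochain G (br s`_i s`_j :: rem_nth i (rem_nth j s)))) =
  \sum_(i < m.+1) \sum_(j < m.+1 | (i < j)%N) (-1) ^+ (i + j) *: G (ce_arg2 (nij_bracket P br) a i j) -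
  PM (\sum_(i < m.+1) \sum_(j < m.+1 | (i < j)%N) (-1) ^+ (i + j) *: G (ce_arg2 br a i j)).
  rewrite linear_sum -sumrB; apply: eq_bigr => i _; rewrite linear_sum -sumrB big_mkord.
  by apply: eq_bigr => j ltij; rewrite !arg2 // scalerDr /= scalerN (linearZZ PM).
by rewrite act_part bracket_part linearD; abel.
Qed.

Hypotheses (br_lie : is_lie_bracket br) (act_rep : is_lie_rep br act)
  (P_nij : is_nijenhuis_op br P) (PM_nij : is_nijenhuis_rep P act PM).

Lemma seq_cochain_njo_diff n (f : ('I_n -> g) -> M) :
  seq_cochain (njo_diff br act P PM f) = njo_seq (seq_cochain f).
Proof.
apply: functional_extensionality => t; rewrite {1}/seq_cochain.
case: eqP => [size_t|size_t].
  rewrite njo_diff_seqE; congr njo_seq; apply: (@eq_from_nth _ 0).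
    by rewrite size_mkseq size_t.
  by move=> k; rewrite size_mkseq => ltk; rewrite nth_mkseq // inordK.
symmetry; apply: ce_diff_seq_eq0 => [|u size_u]; first exact: njo_actD P PM act_rep.
by rewrite /seq_cochain; case: eqP => // size_un; case: size_t; rewrite -size_u size_un.
Qed.

Lemma njo_seq2 F s : alternating_seq F -> slot_additive F -> njo_seq (njo_seq F) s = 0.
Proof.
apply: ce_diff_seq2.
- exact: njo_actD P PM act_rep.
- exact: njo_act_PM act_rep PM_nij.
- exact: njo_act_comm act_rep P_nij PM_nij.
- exact: nij_leibniz br_lie P_nij.
- exact: lie_leibniz br_lie.
- exact: nij_lie_compat P br_lie.
- exact: nij_skew P br_lie.
- exact: lie_skew br_lie.
Qed.

End NjoSeq.

Theorem lemma6p2 (K : fieldType) (charK0 : [pchar K] =i pred0)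
  (g M : lmodType K) (br : g -> g -> g) (act : g -> M -> M)
  (P : {linear g -> g}) (PM : {linear M -> M}) :
  is_lie_bracket br -> is_lie_rep br act ->
  is_nijenhuis_op br P -> is_nijenhuis_rep P act PM ->
  forall (n : nat) (f : ('I_n -> g) -> M),
    multilinear f -> alternating f ->
    forall a : 'I_n.+2 -> g,
      njo_diff br act P PM (njo_diff br act P PM f) a = 0.
Proof.
move=> br_lie act_rep P_nij PM_nij n f f_lin f_alt a.
rewrite njo_diff_seqE seq_cochain_njo_diff // njo_seq2 //.
  exact: seq_cochain_alternating.
exact: seq_cochain_slot_additive.
Qed.
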